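(* There is no nontrivial valued Abelian group of exponent $3$ which, with the metric $(x,y)\mapsto p(x-y)$ induced by its value $p$, is Urysohn as a metric space.
   Context: A value on an Abelian group $G$ is $p\colon G\to[0,\infty)$ with $p(x)=0\iff x=0$, $p(-x)=p(x)$, $p(x+y)\leqslant p(x)+p(y)$. A group has exponent $3$ if $3x=0$ for all $x$. A metric space $X$ is Urysohn if (U0) it is separable and complete, (U1) every separable metric space of diameter no greater than $\mathrm{diam}\,X$ isometrically embeds into $X$, and (U2) every isometry between two finite subsets of $X$ extends to an isometry of $X$ onto $X$. *)

From Stdlib Require Import Reals List.
From mathcomp Require Import all_boot all_algebra.
Set Implicit Arguments. Unset Strict Implicit. Unset Printing Implicit Defensive.

Open Scope R_scope.

Definition is_value (G : zmodType) (p : G -> R) : Prop :=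
  (forall x, 0 <= p x) /\
  (forall x, p x = 0 <-> x = 0%R) /\
  (forall x, p (- x)%R = p x) /\
  (forall x y, p (x + y)%R <= p x + p y).

Definition exponent3 (G : zmodType) : Prop := forall x : G, (x *+ 3)%R = 0%R.

Definition value_metric (G : zmodType) (p : G -> R) : G -> G -> R :=
  fun x y => p (x - y)%R.

Definition is_metric (T : Type) (d : T -> T -> R) : Prop :=
  (forall x y, 0 <= d x y) /\
  (forall x y, d x y = 0 <-> x = y) /\
  (forall x y, d x y = d y x) /\
  (forall x y z, d x z <= d x y + d y z).

(* Separable: a countable dense subset (the empty space is separable). *)
Definition separable (T : Type) (d : T -> T -> R) : Prop :=
  T -> exists s : nat -> T, forall x eps, 0 < eps -> exists n, d x (s n) < eps.

Definition cauchy (T : Type) (d : T -> T -> R) (u : nat -> T) : Prop :=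
  forall eps, 0 < eps -> exists N, forall m n, (N <= m)%nat -> (N <= n)%nat ->
    d (u m) (u n) < eps.

Definition converges_to (T : Type) (d : T -> T -> R) (u : nat -> T) (l : T) : Prop :=
  forall eps, 0 < eps -> exists N, forall n, (N <= n)%nat -> d (u n) l < eps.

Definition complete (T : Type) (d : T -> T -> R) : Prop :=
  forall u, cauchy d u -> exists l, converges_to d u l.

(* diam Y <= diam X, where diam = sup of distances (in [0, +oo]):
   every distance in Y is bounded by the supremum of distances in X. *)
Definition diam_le (Y X : Type) (dY : Y -> Y -> R) (dX : X -> X -> R) : Prop :=
  forall y1 y2 r, r < dY y1 y2 -> exists x1 x2, r < dX x1 x2.

Definition isometric (Y X : Type) (dY : Y -> Y -> R) (dX : X -> X -> R) (f : Y -> X) : Prop :=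
  forall a b, dX (f a) (f b) = dY a b.

Definition Urysohn (T : Type) (d : T -> T -> R) : Prop :=
  is_metric d /\
  separable d /\ complete d /\
  (forall (Y : Type) (dY : Y -> Y -> R), is_metric dY -> separable dY ->
     diam_le dY d -> exists f : Y -> T, isometric dY d f) /\
  (* (U2): an isometry g between the finite set {l} and its image extends
     to an isometry of T onto T. *)
  (forall (l : list T) (g : T -> T),
     (forall a b, In a l -> In b l -> d (g a) (g b) = d a b) ->
     exists h : T -> T, isometric d d h /\ (forall y, exists x, h x = y) /\
       (forall a, In a l -> h a = g a)).

(* In a group of exponent 3, any three points [a, b, c] with [a + b + c = 0]
   form an equilateral triangle, and for every [w] the identity
   [a - w = (w - b) + (w - c)] forces [p (w - a) <= p (w - b) + p (w - c)].
   An Urysohn space contains a copy of the four-point space where [a, b, c]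
   are at mutual distance [3r/4] and [w] lies at distances [r, 3r/8, 3r/8]
   from them. Moving [c] to [- (a + b)] while fixing [a] and [b] is a partial
   isometry, so by (U2) it extends to a global isometry; the image of [w] then
   violates the inequality above, since [r > 3r/8 + 3r/8]. *)
From Stdlib Require Import Reals List Lra.
From mathcomp Require Import all_boot all_algebra.
Set Implicit Arguments.
Unset Strict Implicit.
Import GRing.Theory.
Open Scope R_scope.

Section ExponentThree.
Variable G : zmodType.
Hypothesis G3 : exponent3 G.
Local Open Scope ring_scope.

Lemma addrr_exponent3 (x : G) : x + x = - x.
Proof.
apply/eqP; rewrite -subr_eq0 opprK -(G3 x).
by rewrite !mulrS mulr0n addr0 addrA.
Qed.

Lemma zero_sum_subr (a b c : G) : a + b + c = 0 -> c - a = a - b.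
Proof.
move=> /eqP; rewrite addrC addr_eq0 => /eqP ->.
by rewrite opprD addrAC addrr_exponent3 opprK.
Qed.

Lemma zero_sum_split (a b c w : G) : a + b + c = 0 -> a - w = (w - b) + (w - c).
Proof.
move=> abc; have bc : b + c = - a by apply/eqP; rewrite -addr_eq0 addrC addrA abc.
by rewrite addrACA addrr_exponent3 -opprD bc opprK addrC.
Qed.

End ExponentThree.

Section Value.
Variables (G : zmodType) (p : G -> R).
Hypothesis p_value : is_value p.

Lemma value0 : p 0%R = 0.
Proof. by case: p_value => _ [p0 _]; apply/p0. Qed.

Lemma value_gt0 (x : G) : x <> 0%R -> 0 < p x.
Proof.
case: p_value => ge0 [p0 _] nx0; case: (ge0 x) => // px0.
by case: nx0; apply/p0.
Qed.

Lemma value_metric_zero_sum (a b c : G) :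
  exponent3 G -> (a + b + c = 0)%R -> value_metric p c a = value_metric p a b.
Proof. by move=> G3 abc; rewrite /value_metric (zero_sum_subr G3 abc). Qed.

Lemma value_zero_sum_triangle (a b c w : G) :
  exponent3 G -> (a + b + c = 0)%R -> p (w - a)%R <= p (w - b)%R + p (w - c)%R.
Proof.
case: p_value => _ [_ [pN pD]] G3 abc.
by rewrite -opprB pN (zero_sum_split G3 w abc).
Qed.

End Value.

Lemma Urysohn_move_point (T : eqType) (d : T -> T -> R) (a b c c' : T) :
  Urysohn d -> a != c -> b != c -> d c' a = d c a -> d c' b = d c b ->
  exists h : T -> T, isometric d d h /\ h a = a /\ h b = b /\ h c = c'.
Proof.
move=> [[_ [d0 [dC _]]] [_ [_ [_ U2]]]] ac bc c'a c'b.
have dxx x : d x x = 0 by apply/d0.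
pose g z := if z == c then c' else z.
have [ga gb gc] : [/\ g a = a, g b = b & g c = c'].
  by rewrite /g eqxx (negbTE ac) (negbTE bc).
have [|h [h_iso [_ h_ext]]] := U2 [:: a; b; c] g.
  move=> u v /= hu hv.
  case: hu => [<-|[<-|[<-|[]]]]; case: hv => [<-|[<-|[<-|[]]]];
    rewrite ?ga ?gb ?gc ?dxx //.
  - by rewrite dC c'a dC.
  - by rewrite dC c'b dC.
exists h; split; first exact: h_iso.
by rewrite !h_ext /= ?ga ?gb ?gc; auto.
Qed.

Inductive quad := QA | QB | QC | QW.

Definition quad_dist (r : R) (u v : quad) : R :=
  match u, v with
  | QA, QA | QB, QB | QC, QC | QW, QW => 0
  | QA, QB | QB, QA | QA, QC | QC, QA | QB, QC | QC, QB => 3 * r / 4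
  | QW, QA | QA, QW => r
  | _, _ => 3 * r / 8
  end.

Lemma quad_dist_metric (r : R) : 0 < r -> is_metric (quad_dist r).
Proof.
move=> r_gt0; split; [|split; [|split]].
- by case; case => /=; lra.
- by case; case => /=; split => // H; (discriminate || lra).
- by case; case.
- by case; case; case => /=; lra.
Qed.

Lemma quad_dist_separable (r : R) : separable (quad_dist r).
Proof.
move=> _; exists (fun n => match n with 0 => QA | 1 => QB | 2 => QC | _ => QW end)%nat.
by move=> x eps eps_gt0; case: x; [exists 0%nat | exists 1%nat | exists 2%nat | exists 3%nat].
Qed.

Lemma quad_dist_le (r : R) (u v : quad) : 0 < r -> quad_dist r u v <= r.
Proof. by move=> r_gt0; case: u; case: v => /=; lra. Qed.

Theorem proposition2p18 (G : zmodType) (p : G -> R) :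
  is_value p -> exponent3 G -> (exists x : G, x <> 0%R) ->
  ~ Urysohn (value_metric p).
Proof.
move=> p_value G3 [x0 x0_neq0] U.
have r_gt0 := value_gt0 p_value x0_neq0; set r := p x0 in r_gt0.
have [f f_iso] : exists f : quad -> G, isometric (quad_dist r) (value_metric p) f.
  case: U => _ [_ [_ [U1 _]]]; apply: U1.
  - exact: quad_dist_metric.
  - exact: quad_dist_separable.
  - move=> u v s s_lt; exists x0, 0%R; rewrite /value_metric subr0.
    by apply: Rlt_le_trans (quad_dist_le u v r_gt0).
set a := f QA; set b := f QB; set c := f QC; set c' := (- (a + b))%R.
have abc' : (a + b + c' = 0)%R by rewrite subrr.
have bac' : (b + a + c' = 0)%R by rewrite [(b + a)%R]addrC.
have f_neq_c u : quad_dist r u QC <> 0 -> f u != c.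
  by move=> duc; apply/eqP => fuc; case: duc; rewrite -f_iso fuc /value_metric subrr value0.
have ac : a != c by apply: f_neq_c => /=; lra.
have bc : b != c by apply: f_neq_c => /=; lra.
have c'a : value_metric p c' a = value_metric p c a.
  by rewrite (value_metric_zero_sum p G3 abc') (f_iso QA QB) (f_iso QC QA).
have c'b : value_metric p c' b = value_metric p c b.
  by rewrite (value_metric_zero_sum p G3 bac') (f_iso QB QA) (f_iso QC QB).
have [h [h_iso [ha [hb hc]]]] := Urysohn_move_point U ac bc c'a c'b.
have w_dist u : p (h (f QW) - h (f u))%R = quad_dist r QW u.
  by rewrite -[LHS]/(value_metric p _ _) h_iso f_iso.
have := value_zero_sum_triangle p_value (h (f QW)) G3 abc'.
rewrite -ha -hb -hc !w_dist /=.
by clear -r_gt0; lra.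
Qed.
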